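(* Let $C^*>0$ and $C_1,C_2>0$. Let $\boldsymbol m_e\in[C(\bar\Omega)]^3$ satisfy $\|\boldsymbol m_e\|_{W^{1,\infty}}\le C^*$ and $|\boldsymbol m_e|=1$ pointwise, and let $\underline{\boldsymbol m}_h=\mathcal P_h\boldsymbol m_e$. For a grid function $\tilde{\boldsymbol m}_h\in\boldsymbol X$ set $\boldsymbol m_h=\tilde{\boldsymbol m}_h/|\tilde{\boldsymbol m}_h|$ pointwise, $\boldsymbol e_h=\underline{\boldsymbol m}_h-\boldsymbol m_h$, $\tilde{\boldsymbol e}_h=\underline{\boldsymbol m}_h-\tilde{\boldsymbol m}_h$. Suppose $$\|\tilde{\boldsymbol e}_h\|_2\le2k^{15/8},\qquad\|\nabla_h\tilde{\boldsymbol e}_h\|_2\le\tfrac12k^{11/8},$$ where $k>0$ and $C_1h\le k\le C_2h$. Then, for $k$ and $h$ sufficiently small, $\tilde{\boldsymbol m}_h$ does not vanish, and $$\|\tilde{\boldsymbol e}_h\|_2^2\ge(1-k^{5/4})\|\boldsymbol e_h\|_2^2+(1-k^{1/4})\|\tilde{\boldsymbol e}_h-\boldsymbol e_h\|_2^2,$$ and for every $\delta>0$ there is a constant $\mathcal C_\delta$ (independent of $h,k$) such that $$\|\nabla_h\boldsymbol e_h\|_2^2\le(1+\delta)\|\nabla_h\tilde{\boldsymbol e}_h\|_2^2+\mathcal C_\delta\|\tilde{\boldsymbol e}_h\|_2^2.$$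
   Context: $\Omega=[0,1]^3$, $h=1/N$, cell-centered grid points $((i-\tfrac12)h,(j-\tfrac12)h,(\ell-\tfrac12)h)$, $0\le i,j,\ell\le N+1$, interior points $\Omega_h^0$ those with $1\le i,j,\ell\le N$. $\boldsymbol X$ is the space of $\mathbb R^3$-valued grid functions satisfying the discrete Neumann condition $\boldsymbol m_{0,j,\ell}=\boldsymbol m_{1,j,\ell}$, $\boldsymbol m_{N+1,j,\ell}=\boldsymbol m_{N,j,\ell}$ (and analogously in $j,\ell$). $\mathcal P_h$ is pointwise interpolation at interior points, extended to ghost points by the Neumann condition. Forward differences $D_xf_{i,j,\ell}=(f_{i+1,j,\ell}-f_{i,j,\ell})/h$ (similarly $D_y,D_z$); $\nabla_h$ collects all forward differences. $\|\boldsymbol f\|_2^2=h^3\sum_{\Omega_h^0}|\boldsymbol f|^2$ and $\|\nabla_h\boldsymbol f\|_2$ is the analogous discrete norm of the difference quotients. *)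

From HB Require Import structures.
From mathcomp Require Import all_boot all_order all_algebra.
From mathcomp Require Import all_classical all_reals.
From mathcomp Require Import exp.
Set Implicit Arguments. Unset Strict Implicit. Unset Printing Implicit Defensive.
Import Order.TTheory GRing.Theory Num.Theory.
Local Open Scope ring_scope.

Section Grid.
Variable R : realType.

Definition vnorm2 (v : 'rV[R]_3) : R := \sum_(c < 3) v 0 c ^+ 2.
Definition vnorm (v : 'rV[R]_3) : R := Num.sqrt (vnorm2 v).

Definition dist3 (x1 x2 x3 y1 y2 y3 : R) : R :=
  Num.sqrt ((x1 - y1) ^+ 2 + (x2 - y2) ^+ 2 + (x3 - y3) ^+ 2).
Definition in_cube (x1 x2 x3 : R) : Prop :=
  [/\ 0 <= x1 <= 1, 0 <= x2 <= 1 & 0 <= x3 <= 1].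

Definition hN (N : nat) : R := (N%:R)^-1.

(* grid functions: values at indices (i,j,l), 0 <= i,j,l <= N+1 *)
Definition gridfun := nat -> nat -> nat -> 'rV[R]_3.

(* the space X: discrete Neumann condition in each direction *)
Definition inX (N : nat) (f : gridfun) : Prop :=
  (forall j l, (j <= N.+1)%N -> (l <= N.+1)%N ->
     f 0%N j l = f 1%N j l /\ f N.+1 j l = f N j l) /\
  (forall i l, (i <= N.+1)%N -> (l <= N.+1)%N ->
     f i 0%N l = f i 1%N l /\ f i N.+1 l = f i N l) /\
  (forall i j, (i <= N.+1)%N -> (j <= N.+1)%N ->
     f i j 0%N = f i j 1%N /\ f i j N.+1 = f i j N).

(* cell-centred coordinate of index i *)
Definition coord (N i : nat) : R := (i%:R - 2^-1) * hN N.

(* index of the interior point used by the Neumann extension *)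
Definition clampN (N i : nat) : nat :=
  if i == 0%N then 1%N else if (N < i)%N then N else i.

(* P_h : pointwise interpolation at interior points, extended by Neumann *)
Definition Ph (N : nat) (m : R -> R -> R -> 'rV[R]_3) : gridfun :=
  fun i j l => m (coord N (clampN N i)) (coord N (clampN N j))
                 (coord N (clampN N l)).

Definition normalize (f : gridfun) : gridfun :=
  fun i j l => (vnorm (f i j l))^-1 *: f i j l.

Definition Dx (N : nat) (f : gridfun) : gridfun :=
  fun i j l => (hN N)^-1 *: (f i.+1 j l - f i j l).
Definition Dy (N : nat) (f : gridfun) : gridfun :=
  fun i j l => (hN N)^-1 *: (f i j.+1 l - f i j l).
Definition Dz (N : nat) (f : gridfun) : gridfun :=
  fun i j l => (hN N)^-1 *: (f i j l.+1 - f i j l).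

Definition gsum (N : nat) (g : nat -> nat -> nat -> R) : R :=
  hN N ^+ 3 * \sum_(1 <= i < N.+1) \sum_(1 <= j < N.+1) \sum_(1 <= l < N.+1)
    g i j l.

Definition l2sq (N : nat) (f : gridfun) : R := gsum N (fun i j l => vnorm2 (f i j l)).
Definition gradsq (N : nat) (f : gridfun) : R :=
  gsum N (fun i j l => vnorm2 (Dx N f i j l) + vnorm2 (Dy N f i j l)
                       + vnorm2 (Dz N f i j l)).
Definition l2norm (N : nat) (f : gridfun) : R := Num.sqrt (l2sq N f).
Definition gradnorm (N : nat) (f : gridfun) : R := Num.sqrt (gradsq N f).

Definition gsub (f g : gridfun) : gridfun := fun i j l => f i j l - g i j l.

(* ||m||_{W^{1,oo}} <= C on the closed cube: sup-norm bound and
   Lipschitz bound (= W^{1,oo} seminorm on the convex domain). *)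
Definition W1inf_bounded (C : R) (m : R -> R -> R -> 'rV[R]_3) : Prop :=
  (forall x1 x2 x3, in_cube x1 x2 x3 -> vnorm (m x1 x2 x3) <= C) /\
  (forall x1 x2 x3 y1 y2 y3, in_cube x1 x2 x3 -> in_cube y1 y2 y3 ->
     vnorm (m x1 x2 x3 - m y1 y2 y3) <= C * dist3 x1 x2 x3 y1 y2 y3).

End Grid.

(* Write q = k^(1/8), so that N <= C2 q^(-8).  A discrete
   Gagliardo--Nirenberg--Sobolev inequality, obtained from one-dimensional
   mean-plus-total-variation bounds on |u|^4 and a discrete Loomis--Whitney
   inequality, gives |u|^2 <= N (2 |u|_2^2 + 72 |grad u|_2^2) pointwise; for the
   error u = m_h - m~_h this is O(q^14).  At a point where the unit vector a is
   replaced by b = a - t, the normalisation error splits exactly into a radial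
   part (1 - |b|)^2 and a tangential part |b| |a - b/|b||^2, which yields the L^2
   inequality once |t|^2 << k^(3/2).  For the gradient, a |-> a - (a - t)/|a - t|
   is 6|t|-Lipschitz on unit vectors, so Young's inequality and the Lipschitz
   bound on m_e control the difference quotients of e_h by (1 + delta) times
   those of e~_h plus a multiple of |e~_h|^2; when the pointwise error is not yet
   below the threshold required by delta, k is bounded below, hence so is h,
   and the inverse estimate |grad_h f|_2 <= C h^(-1) |f|_2 absorbs the gradient
   of e~_h into the L^2 term. *)

From Pilot Require Import Defs.
From HB Require Import structures.
From mathcomp Require Import all_boot all_order all_algebra.
From mathcomp Require Import all_classical all_reals.
From mathcomp Require Import exp.
From mathcomp Require Import ring lra zify.
Import Order.TTheory GRing.Theory Num.Theory.

Set Implicit Arguments.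
Unset Strict Implicit.
Unset Printing Implicit Defensive.
Local Open Scope ring_scope.

(** * Vectors of R^3 and normalisation *)

Lemma young_ineq (R : realFieldType) (lam a b : R) : 0 < lam ->
  2 * (a * b) <= lam * a ^+ 2 + lam^-1 * b ^+ 2.
Proof.
move=> lam_gt0.
have -> : lam * a ^+ 2 + lam^-1 * b ^+ 2 = 2 * (a * b) + lam^-1 * (lam * a - b) ^+ 2.
  by field; rewrite gt_eqF.
by rewrite lerDl mulr_ge0 ?sqr_ge0 // invr_ge0 ltW.
Qed.

(* Optimising the weight [lam] in a family of Young-type bounds. *)
Lemma le_sqrtM_of_Young (R : rcfType) (S A B : R) : 0 <= A -> 0 <= B ->
  (forall lam, 0 < lam -> 2 * S <= lam * A + lam^-1 * B) ->
  S <= Num.sqrt A * Num.sqrt B.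
Proof.
move=> A_ge0 B_ge0 hY.
have [A0|A_gt0] := eqVneq A 0.
  rewrite A0 sqrtr0 mul0r leNgt; apply/negP => S_gt0.
  have := hY ((B + 1) / S); rewrite A0 mulr0 add0r invf_div divr_gt0 ?ltr_pwDr //.
  move=> /(_ isT); rewrite mulrAC ler_pdivlMr ?ltr_pwDr //; nra.
have [B0|B_gt0] := eqVneq B 0.
  rewrite B0 sqrtr0 mulr0 leNgt; apply/negP => S_gt0.
  have A_gt0' : 0 < A by rewrite lt_def A_gt0.
  have := hY (S / (A + 1)); rewrite B0 mulr0 addr0 divr_gt0 ?ltr_pwDr //.
  move=> /(_ isT); rewrite mulrAC ler_pdivlMr ?ltr_pwDr //; nra.
have sA : 0 < Num.sqrt A by rewrite sqrtr_gt0 lt_def A_gt0.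
have sB : 0 < Num.sqrt B by rewrite sqrtr_gt0 lt_def B_gt0.
have := hY (Num.sqrt B / Num.sqrt A); rewrite divr_gt0 // => /(_ isT).
rewrite -{2}(sqr_sqrtr A_ge0) -{3}(sqr_sqrtr B_ge0).
have -> : Num.sqrt B / Num.sqrt A * Num.sqrt A ^+ 2 +
    (Num.sqrt B / Num.sqrt A)^-1 * Num.sqrt B ^+ 2 = 2 * (Num.sqrt A * Num.sqrt B).
  by field; rewrite !gt_eqF.
by rewrite ler_pM2l.
Qed.

Section Vector3.
Variable R : realType.
Implicit Types (u v w a b : 'rV[R]_3) (c : R).

Definition dot u v : R := \sum_(c < 3) u 0 c * v 0 c.

Lemma sum3 (F : 'I_3 -> R) : \sum_(c < 3) F c = F 0 + F 1 + F 2.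
Proof.
rewrite !big_ord_recr big_ord0 /= add0r.
by congr (_ + _ + _); congr F; apply: val_inj.
Qed.

Lemma vnorm2E v : vnorm2 v = v 0 0 ^+ 2 + v 0 1 ^+ 2 + v 0 2 ^+ 2.
Proof. by rewrite /vnorm2 sum3. Qed.

Lemma dotE u v : dot u v = u 0 0 * v 0 0 + u 0 1 * v 0 1 + u 0 2 * v 0 2.
Proof. by rewrite /dot sum3. Qed.

Lemma vnorm2_ge0 v : 0 <= vnorm2 v.
Proof. by apply: sumr_ge0 => c _; apply: sqr_ge0. Qed.

Lemma vnorm_ge0 v : 0 <= vnorm v.
Proof. exact: sqrtr_ge0. Qed.

Lemma vnorm_sqr v : vnorm v ^+ 2 = vnorm2 v.
Proof. by rewrite sqr_sqrtr // vnorm2_ge0. Qed.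

Lemma vnorm_le v c : 0 <= c -> (vnorm v <= c) = (vnorm2 v <= c ^+ 2).
Proof. by move=> c_ge0; rewrite -vnorm_sqr ler_pXn2r ?nnegrE ?vnorm_ge0. Qed.

Lemma vnorm2D u v : vnorm2 (u + v) = vnorm2 u + 2 * dot u v + vnorm2 v.
Proof. rewrite !vnorm2E dotE !mxE; ring. Qed.

Lemma vnorm2B u v : vnorm2 (u - v) = vnorm2 u - 2 * dot u v + vnorm2 v.
Proof. rewrite !vnorm2E dotE !mxE; ring. Qed.

Lemma vnorm2Z c v : vnorm2 (c *: v) = c ^+ 2 * vnorm2 v.
Proof. rewrite !vnorm2E !mxE; ring. Qed.

Lemma vnorm2N v : vnorm2 (- v) = vnorm2 v.
Proof. by rewrite -scaleN1r vnorm2Z sqrrN expr1n mul1r. Qed.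

Lemma vnormZ c v : vnorm (c *: v) = `|c| * vnorm v.
Proof. by rewrite /vnorm vnorm2Z sqrtrM ?sqr_ge0 // sqrtr_sqr. Qed.

Lemma vnormN v : vnorm (- v) = vnorm v.
Proof. by rewrite /vnorm vnorm2N. Qed.

Lemma vnorm0 : vnorm 0 = 0 :> R.
Proof. by rewrite -(scale0r (0 : 'rV[R]_3)) vnormZ normr0 mul0r. Qed.

Lemma dotZl c u v : dot (c *: u) v = c * dot u v.
Proof. rewrite !dotE !mxE; ring. Qed.

Lemma dotZr c u v : dot u (c *: v) = c * dot u v.
Proof. rewrite !dotE !mxE; ring. Qed.

Lemma dotBl u v w : dot (u - v) w = dot u w - dot v w.
Proof. rewrite !dotE !mxE; ring. Qed.

Lemma dot_sqr_le u v : dot u v ^+ 2 <= vnorm2 u * vnorm2 v.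
Proof.
rewrite dotE !vnorm2E.
set a := u 0 0; set b := u 0 1; set c := u 0 2.
set d := v 0 0; set e := v 0 1; set f := v 0 2.
have := sqr_ge0 (a * e - b * d); have := sqr_ge0 (a * f - c * d).
have := sqr_ge0 (b * f - c * e); nra.
Qed.

Lemma ler_norm_dot u v : `|dot u v| <= vnorm u * vnorm v.
Proof.
rewrite -(@ler_pXn2r _ 2) ?nnegrE ?mulr_ge0 ?vnorm_ge0 //.
by rewrite exprMn !vnorm_sqr real_normK ?num_real // dot_sqr_le.
Qed.

Lemma ler_dot u v : dot u v <= vnorm u * vnorm v.
Proof. exact: le_trans (ler_norm _) (ler_norm_dot u v). Qed.

Lemma ler_vnormD u v : vnorm (u + v) <= vnorm u + vnorm v.
Proof.
rewrite vnorm_le ?addr_ge0 ?vnorm_ge0 // vnorm2D sqrrD !vnorm_sqr.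
have := ler_dot u v; lra.
Qed.

Lemma ler_vnorm_dist u v : `|vnorm u - vnorm v| <= vnorm (u - v).
Proof.
have hu := ler_vnormD v (u - v); have hv := ler_vnormD u (v - u).
rewrite addrC subrK in hu; rewrite addrC subrK -opprB vnormN in hv.
by rewrite ler_norml; apply/andP; split; lra.
Qed.

Lemma vnorm2D_Young u v eps : 0 < eps ->
  vnorm2 (u + v) <= (1 + eps) * vnorm2 u + (1 + eps^-1) * vnorm2 v.
Proof.
move=> eps_gt0; rewrite vnorm2D -!vnorm_sqr.
have := young_ineq (vnorm u) (vnorm v) eps_gt0.
have := ler_dot u v; lra.
Qed.

End Vector3.

Section Normalization.
Variable R : realType.
Implicit Types (a b t x y : 'rV[R]_3) (eta : R).

Let half_gt0 : (0 : R) < 2^-1. Proof. by rewrite invr_gt0. Qed.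
Let halfD : (2^-1 : R) + 2^-1 = 1. Proof. by field. Qed.

Definition nrm x : 'rV[R]_3 := (vnorm x)^-1 *: x.

Lemma unit_vnorm a : vnorm2 a = 1 -> vnorm a = 1.
Proof. by move=> a1; rewrite /vnorm a1 sqrtr1. Qed.

Lemma vnorm_ge_unitB a b eta : vnorm2 a = 1 -> vnorm (a - b) <= eta -> 1 - eta <= vnorm b.
Proof.
move=> a1 ab_le; have := ler_vnorm_dist a b; rewrite (unit_vnorm a1).
have := ler_norm (1 - vnorm b); lra.
Qed.

Lemma vnorm_ge_half a b : vnorm2 a = 1 -> vnorm2 (a - b) <= 4^-1 -> 2^-1 <= vnorm b.
Proof.
move=> a1 ab_le; have -> : (2^-1 : R) = 1 - 2^-1 by lra.
apply: vnorm_ge_unitB a1 _; rewrite vnorm_le ?invr_ge0 //.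
by have -> : (2^-1 : R) ^+ 2 = 4^-1 by field.
Qed.

Lemma vnorm2_nrmB_mul x y : 0 < vnorm x -> 0 < vnorm y ->
  vnorm2 (nrm x - nrm y) * (vnorm x * vnorm y) <= vnorm2 (x - y).
Proof.
move=> x_gt0 y_gt0; rewrite /nrm vnorm2B !vnorm2Z dotZl dotZr vnorm2B -!vnorm_sqr.
set r := vnorm x; set s := vnorm y; set d := dot x y.
have -> : ((r^-1) ^+ 2 * r ^+ 2 - 2 * (r^-1 * (s^-1 * d)) + (s^-1) ^+ 2 * s ^+ 2) * (r * s)
    = 2 * r * s - 2 * d.
  by field; rewrite !gt_eqF.
have := sqr_ge0 (r - s); lra.
Qed.

Lemma vnorm2_nrmB_le x y rho : 0 < rho -> rho <= vnorm x -> rho <= vnorm y ->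
  vnorm2 (nrm x - nrm y) * rho ^+ 2 <= vnorm2 (x - y).
Proof.
move=> rho_gt0 rx ry.
apply: le_trans (vnorm2_nrmB_mul (lt_le_trans rho_gt0 rx) (lt_le_trans rho_gt0 ry)).
by rewrite ler_wpM2l ?vnorm2_ge0 // expr2 ler_pM // ltW.
Qed.

Lemma unit_vnorm_diff a a' t : vnorm2 a = 1 -> vnorm2 a' = 1 ->
  2^-1 <= vnorm (a - t) -> 2^-1 <= vnorm (a' - t) ->
  `|vnorm (a' - t) - vnorm (a - t)| <= 2 * vnorm (a - a') * vnorm t.
Proof.
move=> a1 a'1 r_ge s_ge; set r := vnorm (a - t) in r_ge *; set s := vnorm (a' - t) in s_ge *.
have sqr_diff : s ^+ 2 - r ^+ 2 = 2 * dot (a - a') t.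
  by rewrite /s /r !vnorm_sqr !vnorm2B a1 a'1 dotBl; ring.
have prod : `|s - r| * (s + r) = 2 * `|dot (a - a') t|.
  rewrite -[s + r]ger0_norm -?normrM; last by lra.
  by rewrite -subr_sqr sqr_diff normrM gtr0_norm.
have := ler_norm_dot (a - a') t.
have := normr_ge0 (s - r); nra.
Qed.

Lemma unit_nrm_err_lipschitz a a' t : vnorm2 a = 1 -> vnorm2 a' = 1 ->
  2^-1 <= vnorm (a - t) -> 2^-1 <= vnorm (a' - t) ->
  vnorm ((a - nrm (a - t)) - (a' - nrm (a' - t))) <= 6 * vnorm t * vnorm (a - a').
Proof.
move=> a1 a'1 r_ge s_ge.
have r_s := unit_vnorm_diff a1 a'1 r_ge s_ge.
have r_1 : `|vnorm (a - t) - 1| <= vnorm t.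
  by have := ler_vnorm_dist (a - t) a; rewrite (unit_vnorm a1) addrAC subrr add0r vnormN.
set r := vnorm (a - t) in r_ge r_s r_1 *; set s := vnorm (a' - t) in s_ge r_s *.
set w := a - a' in r_s *.
have r_gt0 : 0 < r by exact: lt_le_trans r_ge.
have s_gt0 : 0 < s by exact: lt_le_trans s_ge.
have -> : (a - nrm (a - t)) - (a' - nrm (a' - t)) = (1 - r^-1) *: w - (r^-1 - s^-1) *: (a' - t).
  by rewrite /nrm -/r -/s /w; apply/rowP => c; rewrite !mxE; field; rewrite !gt_eqF.
apply: le_trans (ler_vnormD _ _) _; rewrite vnormN !vnormZ -/s.
have -> : `|1 - r^-1| = `|r - 1| / r.
  have -> : 1 - r^-1 = (r - 1) / r by rewrite mulrBl divff ?gt_eqF // mul1r.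
  by rewrite normrM normfV (gtr0_norm r_gt0).
have -> : `|r^-1 - s^-1| * s = `|s - r| / r.
  have -> : r^-1 - s^-1 = (s - r) / (r * s).
    by field; rewrite !gt_eqF.
  rewrite normrM normfV (gtr0_norm (mulr_gt0 r_gt0 s_gt0)).
  by field; rewrite !gt_eqF.
have r_inv : r^-1 <= 2.
  by rewrite invf_ple ?posrE //; lra.
have r_inv_ge0 : 0 <= r^-1 by rewrite invr_ge0 ltW.
have radial := ler_pM (normr_ge0 _) r_inv_ge0 r_1 r_inv.
have tangential := ler_pM (normr_ge0 _) r_inv_ge0 r_s r_inv.
have := ler_wpM2r (vnorm_ge0 w) radial; lra.
Qed.

Lemma vnorm2_errB_le a a' b b' eta eps : vnorm2 a = 1 -> vnorm2 a' = 1 ->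
  0 <= eta -> eta <= 2^-1 -> vnorm2 (a - b) <= eta ^+ 2 -> vnorm2 (a' - b') <= eta ^+ 2 ->
  0 < eps ->
  vnorm2 ((a' - nrm b') - (a - nrm b))
  <= (1 + eps) / (1 - eta) ^+ 2 * vnorm2 ((a' - b') - (a - b))
     + (1 + eps^-1) * 36 * vnorm2 (a - b) * vnorm2 (a' - a).
Proof.
move=> a1 a'1 eta_ge0 eta_le ab a'b' eps_gt0.
set t := a - b; set t' := a' - b'.
have bE : b = a - t by rewrite /t opprB addrC subrK.
have b'E : b' = a' - t' by rewrite /t' opprB addrC subrK.
have t_le : vnorm t <= eta by rewrite vnorm_le.
have t'_le : vnorm t' <= eta by rewrite vnorm_le.
have low c s : vnorm2 c = 1 -> vnorm s <= eta -> 1 - eta <= vnorm (c - s).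
  by move=> c1 s_le; apply: vnorm_ge_unitB c1 _; rewrite opprB addrC subrK.
have -> : (a' - nrm b') - (a - nrm b) =
    (nrm (a' - t) - nrm (a' - t')) + ((a' - nrm (a' - t)) - (a - nrm (a - t))).
  by rewrite bE b'E; apply/rowP => c; rewrite !mxE; ring.
apply: le_trans (vnorm2D_Young _ _ eps_gt0) _; apply: lerD.
  rewrite -mulrA ler_pM2l; last lra.
  have rho_gt0 : 0 < 1 - eta by lra.
  rewrite mulrC ler_pdivlMr ?exprn_gt0 //.
  have -> : t' - t = (a' - t) - (a' - t').
    by apply/rowP => c; rewrite !mxE; ring.
  by apply: vnorm2_nrmB_le => //; apply: low.
have half c : vnorm2 c = 1 -> 2^-1 <= vnorm (c - t).
  by move=> c1; apply: le_trans (low _ _ c1 t_le); lra.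
rewrite -!mulrA ler_pM2l; last by rewrite ltr_wpDr ?invr_ge0 ?ltW.
have -> : 36 * (vnorm2 t * vnorm2 (a' - a)) = (6 * vnorm t * vnorm (a' - a)) ^+ 2.
  by rewrite !exprMn !vnorm_sqr; ring.
by rewrite -vnorm_le ?mulr_ge0 ?vnorm_ge0 // unit_nrm_err_lipschitz ?half.
Qed.

(* Pointwise form of the L^2 splitting: with [d = 1 - |b|] the radial part,
   [|a - b|^2 = d^2 + |b| |a - nrm b|^2]. *)
Lemma unit_err_split a b (M al be : R) : vnorm2 a = 1 -> vnorm2 (a - b) <= M -> M <= 4^-1 ->
  2 * M <= al * be -> 0 <= al -> 0 <= be ->
  (1 - al) * vnorm2 (a - nrm b) + (1 - be) * vnorm2 ((a - b) - (a - nrm b)) <= vnorm2 (a - b).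
Proof.
move=> a1 abM M_le Mab al_ge0 be_ge0.
have r_ge := vnorm_ge_half a1 (le_trans abM M_le).
set r := vnorm b in r_ge; set E := vnorm2 (a - nrm b); set d := 1 - r.
have r_gt0 : 0 < r by exact: lt_le_trans r_ge.
have -> : vnorm2 ((a - b) - (a - nrm b)) = d ^+ 2.
  have -> : (a - b) - (a - nrm b) = (r^-1 - 1) *: b.
    by rewrite /nrm -/r; apply/rowP => c; rewrite !mxE; ring.
  by rewrite vnorm2Z -vnorm_sqr -/r /d; field; rewrite gt_eqF.
have abE : vnorm2 (a - b) = d ^+ 2 + r * E.
  rewrite /E /nrm -/r !vnorm2B vnorm2Z dotZr a1 -vnorm_sqr -/r /d.
  by field; rewrite gt_eqF.
rewrite abE; rewrite abE in abM.
have E_ge0 : 0 <= E := vnorm2_ge0 _.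
have E_le : E <= 2 * M.
  have : 2^-1 * E <= r * E by rewrite ler_wpM2r.
  have := sqr_ge0 d; lra.
have -> : (1 - al) * E + (1 - be) * d ^+ 2 = d ^+ 2 + r * E - ((al - d) * E + be * d ^+ 2).
  by rewrite /d; ring.
rewrite lerBlDr lerDl.
have [d_le|al_lt] := lerP d al.
  by apply: addr_ge0; apply: mulr_ge0; rewrite ?subr_ge0 ?sqr_ge0.
have d_ge0 : 0 <= d by lra.
have : (d - al) * E <= d * (al * be).
  by apply: ler_pM; lra.
have : 0 <= be * (d * (d - al)) by rewrite !mulr_ge0 // subr_ge0 ltW.
nra.
Qed.

Lemma err_step_le a a' b b' (h Cs eta eps : R) :
  vnorm2 a = 1 -> vnorm2 a' = 1 -> 0 <= eta -> eta <= 2^-1 ->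
  vnorm2 (a - b) <= eta ^+ 2 -> vnorm2 (a' - b') <= eta ^+ 2 -> 0 < eps ->
  h ^+ 2 * vnorm2 (a' - a) <= Cs ^+ 2 ->
  h ^+ 2 * vnorm2 ((a' - nrm b') - (a - nrm b))
  <= (1 + eps) / (1 - eta) ^+ 2 * (h ^+ 2 * vnorm2 ((a' - b') - (a - b)))
     + 36 * (1 + eps^-1) * vnorm2 (a - b) * Cs ^+ 2.
Proof.
move=> a1 a'1 eta_ge0 eta_le ab a'b' eps_gt0 step_le.
have err_le := ler_wpM2l (sqr_ge0 h) (vnorm2_errB_le a1 a'1 eta_ge0 eta_le ab a'b' eps_gt0).
have k_ge0 : 0 <= 36 * (1 + eps^-1) * vnorm2 (a - b).
  by rewrite mulr_ge0 ?vnorm2_ge0 // mulr_ge0 // addr_ge0 // invr_ge0 ltW.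
have step_k := ler_wpM2l k_ge0 step_le.
apply: le_trans err_le _; rewrite mulrDr mulrCA lerD2l.
by rewrite (_ : _ * (_ * _) = 36 * (1 + eps^-1) * vnorm2 (a - b) * (h ^+ 2 * vnorm2 (a' - a)));
  last ring.
Qed.

End Normalization.

(** * Sums over interior indices and a discrete Sobolev inequality *)

Section InteriorSums.
Variables (R : rcfType) (N : nat).
Implicit Types (f g : nat -> R) (F G : nat -> nat -> nat -> R).

Definition interior (i : nat) : bool := (1 <= i <= N)%N.

Definition isum f : R := \sum_(1 <= i < N.+1) f i.

Definition isum3 F : R := isum (fun i => isum (fun j => isum (fun l => F i j l))).

Lemma interiorE i : interior i = (1 <= i <= N)%N.
Proof. by []. Qed.

Lemma interior1 : (0 < N)%N -> interior 1.
Proof. by rewrite /interior leqnn. Qed.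

Lemma interiorN : (0 < N)%N -> interior N.
Proof. by rewrite /interior leqnn andbT. Qed.

Lemma mem_interior i : (i \in index_iota 1 N.+1) = interior i.
Proof. by rewrite mem_index_iota ltnS. Qed.

Lemma ler_isum f g : (forall i, interior i -> f i <= g i) -> isum f <= isum g.
Proof. by move=> fg; apply: ler_sum_nat => i; rewrite ltnS => /fg. Qed.

Lemma eq_isum f g : (forall i, interior i -> f i = g i) -> isum f = isum g.
Proof. by move=> fg; apply: eq_big_nat => i; rewrite ltnS => /fg. Qed.

Lemma isum_ge0 f : (forall i, interior i -> 0 <= f i) -> 0 <= isum f.
Proof.
by move=> f_ge0; rewrite /isum big_seq_cond sumr_ge0 // => i /andP[/[!mem_interior] /f_ge0].
Qed.

Lemma isumD f g : isum (fun i => f i + g i) = isum f + isum g.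
Proof. exact: big_split. Qed.

Lemma isumZ c f : isum (fun i => c * f i) = c * isum f.
Proof. by rewrite /isum mulr_sumr. Qed.

Lemma isum_const c : isum (fun _ => c) = N%:R * c.
Proof. by rewrite /isum sumr_const_nat subSS subn0 mulr_natl. Qed.

Lemma isum_exchange (F : nat -> nat -> R) :
  isum (fun i => isum (fun j => F i j)) = isum (fun j => isum (fun i => F i j)).
Proof. exact: exchange_big. Qed.

Lemma ler_isum_term f i : (forall m, interior m -> 0 <= f m) -> interior i -> f i <= isum f.
Proof.
move=> f_ge0 int_i; rewrite /isum (bigD1_seq i) ?mem_interior ?iota_uniq //= lerDl.
by rewrite big_seq_cond sumr_ge0 // => m /andP[/[!mem_interior] /f_ge0].
Qed.

Lemma ler_isum3 F G : (forall i j l, interior i -> interior j -> interior l -> F i j l <= G i j l) ->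
  isum3 F <= isum3 G.
Proof. by move=> FG; do 3!(apply: ler_isum => ? ?); exact: FG. Qed.

Lemma eq_isum3 F G : (forall i j l, interior i -> interior j -> interior l -> F i j l = G i j l) ->
  isum3 F = isum3 G.
Proof. by move=> FG; do 3!(apply: eq_isum => ? ?); exact: FG. Qed.

Lemma isum3_ge0 F : (forall i j l, interior i -> interior j -> interior l -> 0 <= F i j l) ->
  0 <= isum3 F.
Proof. by move=> F_ge0; do 3!(apply: isum_ge0 => ? ?); exact: F_ge0. Qed.

Lemma isum3D F G : isum3 (fun i j l => F i j l + G i j l) = isum3 F + isum3 G.
Proof. by rewrite /isum3 -isumD; do 2!(apply: eq_isum => ? _; rewrite -isumD). Qed.

Lemma isum3Z c F : isum3 (fun i j l => c * F i j l) = c * isum3 F.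
Proof. by rewrite /isum3 -isumZ; do 2!(apply: eq_isum => ? _; rewrite -isumZ). Qed.

Lemma ler_isum3_term F i j l :
  (forall i j l, interior i -> interior j -> interior l -> 0 <= F i j l) ->
  interior i -> interior j -> interior l -> F i j l <= isum3 F.
Proof.
move=> F_ge0 int_i int_j int_l.
apply: le_trans (ler_isum_term _ int_i); last first.
  by move=> m int_m; do 2!(apply: isum_ge0 => ? ?); exact: F_ge0.
apply: le_trans (ler_isum_term _ int_j); last first.
  by move=> m int_m; apply: isum_ge0 => ? ?; exact: F_ge0.
by apply: ler_isum_term int_l => m int_m; apply: F_ge0.
Qed.

Lemma isum_CauchySchwarz f g :
  isum (fun i => f i * g i) <= Num.sqrt (isum (fun i => f i ^+ 2)) * Num.sqrt (isum (fun i => g i ^+ 2)).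
Proof.
apply: le_sqrtM_of_Young; try by apply: isum_ge0 => i _; apply: sqr_ge0.
by move=> lam lam_gt0; rewrite -!isumZ -isumD ler_isum // => i _; apply: young_ineq.
Qed.

Lemma isum3_CauchySchwarz F G :
  isum3 (fun i j l => F i j l * G i j l)
  <= Num.sqrt (isum3 (fun i j l => F i j l ^+ 2)) * Num.sqrt (isum3 (fun i j l => G i j l ^+ 2)).
Proof.
apply: le_sqrtM_of_Young; try by apply: isum3_ge0 => *; apply: sqr_ge0.
by move=> lam lam_gt0; rewrite -!isum3Z -isum3D ler_isum3 // => *; apply: young_ineq.
Qed.

Lemma isum_sqrtM f g : (forall i, 0 <= f i) -> (forall i, 0 <= g i) ->
  isum (fun i => Num.sqrt (f i) * Num.sqrt (g i)) <= Num.sqrt (isum f) * Num.sqrt (isum g).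
Proof.
move=> f_ge0 g_ge0; apply: le_trans (isum_CauchySchwarz _ _) _.
by rewrite (eq_isum (g := f)) ?(eq_isum (f := fun i => _ ^+ 2) (g := g)) // => i _;
  rewrite sqr_sqrtr.
Qed.

End InteriorSums.

Section LineBounds.
Variables (R : rcfType) (N : nat).
Local Notation interior := (interior N).
Local Notation isum := (isum (R := R) N).
Implicit Types f : nat -> R.

Definition tvar f : R := isum (fun p => `|f p.+1 - f p|).

Lemma tvar_ge0 f : 0 <= tvar f.
Proof. by apply: isum_ge0 => p _. Qed.

Lemma ler_dist_tvar f m n : (1 <= m <= n)%N -> (n <= N.+1)%N -> `|f n - f m| <= tvar f.
Proof.
move=> /andP[m_ge1 mn] n_le; rewrite -telescope_sumr //.
apply: le_trans (ler_norm_sum _ _ _) _.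
rewrite /tvar /isum (big_cat_nat m_ge1 (leq_trans mn n_le)) (big_cat_nat mn n_le) /=.
by rewrite addrCA lerDl addr_ge0 // sumr_ge0.
Qed.

Lemma ler_tvar f i m : interior i -> interior m -> f i <= f m + tvar f.
Proof.
move=> /andP[i_ge1 i_le] /andP[m_ge1 m_le]; have := ler_norm (f i - f m).
have [mi|im] := leqP m i.
  by have := ler_dist_tvar f (introT andP (conj m_ge1 mi)) (leqW i_le); lra.
have := ler_dist_tvar f (introT andP (conj i_ge1 (ltnW im))) (leqW m_le).
by rewrite distrC; lra.
Qed.

Definition mean_tvar f : R := N%:R^-1 * isum f + tvar f.

Lemma mean_tvar_ge0 f : (forall m, 0 <= f m) -> 0 <= mean_tvar f.
Proof. by move=> f_ge0; rewrite addr_ge0 ?tvar_ge0 // mulr_ge0 ?invr_ge0 ?isum_ge0. Qed.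

Lemma ler_mean_tvar f i : (0 < N)%N -> interior i -> f i <= mean_tvar f.
Proof.
move=> N_gt0 int_i.
have N_gt0' : (0 : R) < N%:R by rewrite ltr0n.
have := @ler_isum R N (fun _ => f i) (fun m => f m + tvar f) (fun m => ler_tvar f int_i).
rewrite isumD !isum_const => mean_le.
by rewrite -(ler_pM2l N_gt0') mulrDr mulrA mulfV ?gt_eqF // mul1r.
Qed.

Lemma isum_shift_le f : (0 < N)%N -> (forall i, interior i -> 0 <= f i) -> f N.+1 = f N ->
  isum (fun i => f i.+1) <= 2 * isum f.
Proof.
move=> N_gt0 f_ge0 fN.
have := ler_isum_term f_ge0 (interiorN N_gt0); have := f_ge0 _ (interior1 N_gt0).
rewrite /isum big_nat_recl // big_nat_recr //= fN; lra.
Qed.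

(* Discrete Loomis--Whitney inequality, by three Cauchy--Schwarz steps. *)
Lemma isum3_LoomisWhitney (A B C : nat -> nat -> R) :
  (forall x y, 0 <= A x y) -> (forall x y, 0 <= B x y) -> (forall x y, 0 <= C x y) ->
  isum3 N (fun i j l => Num.sqrt (A j l * B i l * C i j)) <=
  Num.sqrt (isum (fun j => isum (fun l => A j l)) * isum (fun i => isum (fun l => B i l))
            * isum (fun i => isum (fun j => C i j))).
Proof.
move=> A_ge0 B_ge0 C_ge0.
set Ap := fun l => isum (fun j => A j l).
set Bp := fun l => isum (fun i => B i l).
set Cp := fun j => isum (fun i => C i j).
have Ap_ge0 l : 0 <= Ap l by apply: isum_ge0.
have Bp_ge0 l : 0 <= Bp l by apply: isum_ge0.
have Cp_ge0 j : 0 <= Cp j by apply: isum_ge0.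
have -> : isum3 N (fun i j l => Num.sqrt (A j l * B i l * C i j)) =
    isum (fun j => isum (fun l =>
      Num.sqrt (A j l) * isum (fun i => Num.sqrt (B i l) * Num.sqrt (C i j)))).
  rewrite /isum3 isum_exchange; apply: eq_isum => j _; rewrite isum_exchange.
  apply: eq_isum => l _; rewrite -isumZ; apply: eq_isum => i _.
  by rewrite !sqrtrM ?mulr_ge0 // mulrA.
apply: le_trans (_ : isum (fun j => isum (fun l =>
    Num.sqrt (Bp l) * (Num.sqrt (A j l) * Num.sqrt (Cp j)))) <= _).
  do 2!(apply: ler_isum => ? _); rewrite mulrCA ler_wpM2l ?sqrtr_ge0 //.
  exact: isum_sqrtM.
rewrite isum_exchange.
apply: le_trans (_ : isum (fun l =>
    Num.sqrt (Bp l) * (Num.sqrt (Ap l) * Num.sqrt (isum Cp))) <= _).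
  apply: ler_isum => l _; rewrite isumZ ler_wpM2l ?sqrtr_ge0 //.
  exact: isum_sqrtM.
have -> : isum (fun l => Num.sqrt (Bp l) * (Num.sqrt (Ap l) * Num.sqrt (isum Cp)))
    = Num.sqrt (isum Cp) * isum (fun l => Num.sqrt (Ap l) * Num.sqrt (Bp l)).
  by rewrite -isumZ; apply: eq_isum => l _; ring.
apply: le_trans (ler_wpM2l (sqrtr_ge0 (isum Cp)) (isum_sqrtM N Ap_ge0 Bp_ge0)) _.
rewrite [isum Ap]isum_exchange [isum Bp]isum_exchange [isum Cp]isum_exchange.
rewrite -!sqrtrM ?mulr_ge0 ?isum_ge0 //; try by move=> *; apply: isum_ge0.
by rewrite mulrC.
Qed.

End LineBounds.

Section GridFunctions.
Variables (R : realType) (N : nat).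
Local Notation interior := (interior N).
Local Notation isum := (isum (R := R) N).
Local Notation isum3 := (isum3 (R := R) N).
Implicit Types (u v : gridfun R) (F : nat -> nat -> nat -> R).

Definition shx u : gridfun R := fun i j l => u i.+1 j l.
Definition shy u : gridfun R := fun i j l => u i j.+1 l.
Definition shz u : gridfun R := fun i j l => u i j l.+1.

(* Forward differences at interior indices only reach the upper ghost layer. *)
Definition upper_neumann u : Prop :=
  [/\ forall j l, interior j -> interior l -> u N.+1 j l = u N j l,
      forall i l, interior i -> interior l -> u i N.+1 l = u i N l &
      forall i j, interior i -> interior j -> u i j N.+1 = u i j N].

Lemma upper_neumann_gsub u v : upper_neumann u -> upper_neumann v -> upper_neumann (gsub u v).
Proof. by move=> [ux uy uz] [vx vy vz]; split=> ? ? ? ?; rewrite /gsub ?ux ?vx ?uy ?vy ?uz ?vz. Qed.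

Lemma upper_neumann_shift u (P : 'rV[R]_3 -> Prop) :
  upper_neumann u ->
  (forall i j l, interior i -> interior j -> interior l -> P (u i j l)) ->
  forall i j l, interior i -> interior j -> interior l ->
  [/\ P (shx u i j l), P (shy u i j l) & P (shz u i j l)].
Proof.
move=> [ux uy uz] Pu i j l int_i int_j int_l.
have next c : interior c -> interior c.+1 \/ c = N.
  by case/andP=> c_ge1 c_le; case: (ltnP c N) => c_N; [left; apply/andP | right]; lia.
have int_N : interior N.
  by apply: interiorN; case/andP: int_i; apply: leq_trans.
split; rewrite /shx /shy /shz.
- by case: (next _ int_i) => [?|->]; [exact: Pu | rewrite ux //; exact: Pu].
- by case: (next _ int_j) => [?|->]; [exact: Pu | rewrite uy //; exact: Pu].
- by case: (next _ int_l) => [?|->]; [exact: Pu | rewrite uz //; exact: Pu].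
Qed.

Definition gradpt u i j l : R :=
  vnorm2 (Dx N u i j l) + vnorm2 (Dy N u i j l) + vnorm2 (Dz N u i j l).

Lemma l2sqE u : l2sq N u = N%:R^-1 ^+ 3 * isum3 (fun i j l => vnorm2 (u i j l)).
Proof. by []. Qed.

Lemma gradsqE u : gradsq N u = N%:R^-1 ^+ 3 * isum3 (gradpt u).
Proof. by []. Qed.

Lemma gradpt_ge0 u i j l : 0 <= gradpt u i j l.
Proof. by rewrite !addr_ge0 ?vnorm2_ge0. Qed.

Lemma l2sq_ge0 u : 0 <= l2sq N u.
Proof. by rewrite l2sqE mulr_ge0 ?exprn_ge0 ?invr_ge0 // isum3_ge0 // => *; apply: vnorm2_ge0. Qed.

Lemma gradsq_ge0 u : 0 <= gradsq N u.
Proof. by rewrite gradsqE mulr_ge0 ?exprn_ge0 ?invr_ge0 // isum3_ge0 // => *; apply: gradpt_ge0. Qed.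

Lemma vnorm2_Dx u i j l : vnorm2 (Dx N u i j l) = N%:R ^+ 2 * vnorm2 (shx u i j l - u i j l).
Proof. by rewrite /Dx /hN invrK vnorm2Z. Qed.

Lemma vnorm2_Dy u i j l : vnorm2 (Dy N u i j l) = N%:R ^+ 2 * vnorm2 (shy u i j l - u i j l).
Proof. by rewrite /Dy /hN invrK vnorm2Z. Qed.

Lemma vnorm2_Dz u i j l : vnorm2 (Dz N u i j l) = N%:R ^+ 2 * vnorm2 (shz u i j l - u i j l).
Proof. by rewrite /Dz /hN invrK vnorm2Z. Qed.

Lemma gradpt_ge_x u i j l : N%:R ^+ 2 * vnorm2 (shx u i j l - u i j l) <= gradpt u i j l.
Proof. by rewrite -vnorm2_Dx /gradpt -addrA lerDl addr_ge0 ?vnorm2_ge0. Qed.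

Lemma gradpt_ge_y u i j l : N%:R ^+ 2 * vnorm2 (shy u i j l - u i j l) <= gradpt u i j l.
Proof. by rewrite -vnorm2_Dy /gradpt addrAC lerDr addr_ge0 ?vnorm2_ge0. Qed.

Lemma gradpt_ge_z u i j l : N%:R ^+ 2 * vnorm2 (shz u i j l - u i j l) <= gradpt u i j l.
Proof. by rewrite -vnorm2_Dz /gradpt lerDr addr_ge0 ?vnorm2_ge0. Qed.

Lemma isum3_perm_x F : isum (fun j => isum (fun l => isum (fun i => F i j l))) = isum3 F.
Proof.
transitivity (isum (fun j => isum (fun i => isum (fun l => F i j l)))).
  by apply: eq_isum => j _; rewrite isum_exchange.
by rewrite isum_exchange.
Qed.

Lemma isum3_perm_y F : isum (fun i => isum (fun l => isum (fun j => F i j l))) = isum3 F.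
Proof. by apply: eq_isum => i _; rewrite isum_exchange. Qed.

Hypothesis N_gt0 : (0 < N)%N.

Lemma isum3_shx_le F : (forall i j l, 0 <= F i j l) ->
  (forall j l, interior j -> interior l -> F N.+1 j l = F N j l) ->
  isum3 (fun i j l => F i.+1 j l) <= 2 * isum3 F.
Proof.
move=> F_ge0 FN; rewrite -!isum3_perm_x -isumZ; apply: ler_isum => j int_j.
by rewrite -isumZ; apply: ler_isum => l int_l; apply: isum_shift_le => // *; apply: FN.
Qed.

Lemma isum3_shy_le F : (forall i j l, 0 <= F i j l) ->
  (forall i l, interior i -> interior l -> F i N.+1 l = F i N l) ->
  isum3 (fun i j l => F i j.+1 l) <= 2 * isum3 F.
Proof.
move=> F_ge0 FN; rewrite -!isum3_perm_y -isumZ; apply: ler_isum => i int_i.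
by rewrite -isumZ; apply: ler_isum => l int_l; apply: isum_shift_le => // *; apply: FN.
Qed.

Lemma isum3_shz_le F : (forall i j l, 0 <= F i j l) ->
  (forall i j, interior i -> interior j -> F i j N.+1 = F i j N) ->
  isum3 (fun i j l => F i j l.+1) <= 2 * isum3 F.
Proof.
move=> F_ge0 FN; rewrite /isum3 -isumZ; apply: ler_isum => i int_i.
by rewrite -isumZ; apply: ler_isum => j int_j; apply: isum_shift_le => // *; apply: FN.
Qed.

End GridFunctions.

Lemma quartic_dist_le (R : realType) (u v : 'rV[R]_3) :
  `|vnorm2 u ^+ 2 - vnorm2 v ^+ 2| <= 2 * vnorm (u - v) * (vnorm u ^+ 3 + vnorm v ^+ 3).
Proof.
rewrite -!vnorm_sqr; have := ler_vnorm_dist u v.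
set a := vnorm u; set b := vnorm v; have a_ge0 := vnorm_ge0 u; have b_ge0 := vnorm_ge0 v.
have -> : (a ^+ 2) ^+ 2 - (b ^+ 2) ^+ 2 = (a - b) * ((a + b) * (a ^+ 2 + b ^+ 2)) by ring.
have sum_ge0 : 0 <= (a + b) * (a ^+ 2 + b ^+ 2) by rewrite mulr_ge0 ?addr_ge0 ?sqr_ge0.
rewrite normrM (ger0_norm sum_ge0) => dist_le.
have cube_le : (a + b) * (a ^+ 2 + b ^+ 2) <= 2 * (a ^+ 3 + b ^+ 3).
  rewrite -subr_ge0 (_ : _ - _ = (a + b) * (a - b) ^+ 2); last by ring.
  by rewrite mulr_ge0 ?addr_ge0 ?sqr_ge0.
by rewrite mulrAC mulrC ler_pM.
Qed.

Section DiscreteSobolev.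
Variables (R : realType) (N : nat).
Local Notation isum := (isum (R := R) N).
Local Notation isum3 := (isum3 (R := R) N).
Local Notation interior := (interior N).
Implicit Types u v : gridfun R.

Lemma isum3_quartic_le u :
  isum3 (fun i j l => vnorm2 (u i j l) ^+ 2)
  <= Num.sqrt (isum3 (fun i j l => vnorm2 (u i j l)))
     * Num.sqrt (isum3 (fun i j l => vnorm2 (u i j l) ^+ 3)).
Proof.
have V_ge0 i j l : 0 <= vnorm2 (u i j l) := vnorm2_ge0 _.
have := isum3_CauchySchwarz N (fun i j l => Num.sqrt (vnorm2 (u i j l)))
  (fun i j l => Num.sqrt (vnorm2 (u i j l) ^+ 3)).
rewrite (eq_isum3 (G := fun i j l => vnorm2 (u i j l) ^+ 2)); last first.
  move=> i j l _ _ _; rewrite -sqrtrM ?exprn_ge0 // -exprS (_ : 4 = 2 * 2)%N // exprM.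
  by rewrite sqrtr_sqr ger0_norm ?sqr_ge0.
rewrite (eq_isum3 (F := fun i j l => Num.sqrt (vnorm2 (u i j l)) ^+ 2)
  (G := fun i j l => vnorm2 (u i j l))); last by move=> *; rewrite sqr_sqrtr.
rewrite (eq_isum3 (F := fun i j l => Num.sqrt (vnorm2 (u i j l) ^+ 3) ^+ 2)
  (G := fun i j l => vnorm2 (u i j l) ^+ 3)) // => *.
by rewrite sqr_sqrtr ?exprn_ge0.
Qed.

Lemma isum3_quartic_dist_le u v :
  isum3 (fun i j l => vnorm2 (v i j l) ^+ 3) <= 2 * isum3 (fun i j l => vnorm2 (u i j l) ^+ 3) ->
  isum3 (fun i j l => `|vnorm2 (v i j l) ^+ 2 - vnorm2 (u i j l) ^+ 2|)
  <= 6 * Num.sqrt (isum3 (fun i j l => vnorm2 (v i j l - u i j l)))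
       * Num.sqrt (isum3 (fun i j l => vnorm2 (u i j l) ^+ 3)).
Proof.
set X := isum3 (fun i j l => vnorm2 (u i j l) ^+ 3) => vX.
have X_ge0 : 0 <= X.
  by apply: isum3_ge0 => *; rewrite exprn_ge0 ?vnorm2_ge0.
apply: le_trans (_ : 2 * isum3 (fun i j l => vnorm (v i j l - u i j l)
    * (vnorm (v i j l) ^+ 3 + vnorm (u i j l) ^+ 3)) <= _).
  by rewrite -isum3Z; apply: ler_isum3 => *; rewrite mulrA quartic_dist_le.
apply: le_trans (ler_wpM2l _ (isum3_CauchySchwarz _ _ _)) _ => //.
rewrite (eq_isum3 (G := fun i j l => vnorm2 (v i j l - u i j l))); last by move=> *; rewrite vnorm_sqr.
have sum6_le : isum3 (fun i j l => (vnorm (v i j l) ^+ 3 + vnorm (u i j l) ^+ 3) ^+ 2) <= 3 ^+ 2 * X.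
  apply: le_trans (_ : isum3 (fun i j l =>
      2 * vnorm2 (v i j l) ^+ 3 + 2 * vnorm2 (u i j l) ^+ 3) <= _).
    apply: ler_isum3 => i j l _ _ _; rewrite -!vnorm_sqr.
    set a := vnorm (v i j l); set b := vnorm (u i j l).
    rewrite -!exprM (mulnC 2 3) !exprM.
    rewrite -subr_ge0 (_ : _ - _ = (a ^+ 3 - b ^+ 3) ^+ 2) ?sqr_ge0 //; ring.
  by rewrite isum3D !isum3Z -/X expr2; lra.
have s6 : Num.sqrt (isum3 (fun i j l => (vnorm (v i j l) ^+ 3 + vnorm (u i j l) ^+ 3) ^+ 2))
    <= 3 * Num.sqrt X.
  have -> : 3 * Num.sqrt X = Num.sqrt (3 ^+ 2 * X) by rewrite sqrtrM ?sqr_ge0 // sqrtr_sqr ger0_norm.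
  by rewrite ler_sqrt // mulr_ge0 ?sqr_ge0.
have := ler_wpM2l (sqrtr_ge0 (isum3 (fun i j l => vnorm2 (v i j l - u i j l)))) s6.
by have := sqrtr_ge0 X; nra.
Qed.

Lemma isum3_shift_dist_le u v : (0 < N)%N ->
  (forall i j l, N%:R ^+ 2 * vnorm2 (v i j l - u i j l) <= gradpt N u i j l) ->
  isum3 (fun i j l => vnorm2 (v i j l - u i j l)) <= N%:R * gradsq N u.
Proof.
move=> N_gt0 vu_le; have N_gt0' : (0 : R) < N%:R by rewrite ltr0n.
have -> : N%:R * gradsq N u = isum3 (fun i j l => N%:R^-1 ^+ 2 * gradpt N u i j l).
  by rewrite isum3Z gradsqE mulrA; congr (_ * _); field; rewrite gt_eqF.
apply: ler_isum3 => i j l _ _ _.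
by rewrite -(ler_pM2l (exprn_gt0 2 N_gt0')) mulrA -exprMn mulfV ?gt_eqF // expr1n mul1r.
Qed.

End DiscreteSobolev.

Lemma le_pow6_of_le_sqrt_cube (R : rcfType) (X P : R) : 0 <= X -> 0 <= P ->
  X <= Num.sqrt ((Num.sqrt X * P) ^+ 3) -> X <= P ^+ 6.
Proof.
move=> X_ge0 P_ge0 X_le.
have XE : X = Num.sqrt X ^+ 2 by rewrite sqr_sqrtr.
set Y := Num.sqrt X in X_le XE; have Y_ge0 : 0 <= Y := sqrtr_ge0 X.
have Y4_le : Y ^+ 3 * Y <= Y ^+ 3 * P ^+ 3.
  rewrite -exprSr -exprMn (_ : 4 = 2 * 2)%N // exprM -XE.
  rewrite -[(Y * P) ^+ 3]sqr_sqrtr ?exprn_ge0 ?mulr_ge0 //.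
  by rewrite ler_pXn2r ?nnegrE ?sqrtr_ge0.
have Y_le : Y <= P ^+ 3.
  have [Y0|Y_neq0] := eqVneq Y 0; first by rewrite Y0 exprn_ge0.
  have Y_gt0 : 0 < Y by rewrite lt_def Y_neq0.
  by rewrite -(ler_pM2l (exprn_gt0 3 Y_gt0)).
by rewrite XE (_ : 6 = 3 * 2)%N // exprM ler_pXn2r ?nnegrE ?exprn_ge0.
Qed.

Section DiscreteSobolevEmbedding.
Variables (R : realType) (N : nat) (u : gridfun R).
Hypotheses (N_gt0 : (0 < N)%N) (u_neu : upper_neumann N u).
Local Notation isum := (isum (R := R) N).
Local Notation isum3 := (isum3 (R := R) N).
Local Notation interior := (interior N).

Let X := isum3 (fun i j l => vnorm2 (u i j l) ^+ 3).
Let P := Num.sqrt (N%:R * l2sq N u) + 6 * Num.sqrt (N%:R * gradsq N u).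

Let N_gt0' : (0 : R) < N%:R. Proof. by rewrite ltr0n. Qed.

Let X_ge0 : 0 <= X.
Proof. by apply: isum3_ge0 => *; rewrite exprn_ge0 ?vnorm2_ge0. Qed.

Let P_ge0 : 0 <= P.
Proof. by rewrite addr_ge0 ?mulr_ge0 ?sqrtr_ge0. Qed.

Lemma line_sum_le v :
  isum3 (fun i j l => vnorm2 (v i j l) ^+ 3) <= 2 * X ->
  (forall i j l, N%:R ^+ 2 * vnorm2 (v i j l - u i j l) <= gradpt N u i j l) ->
  N%:R^-1 * isum3 (fun i j l => vnorm2 (u i j l) ^+ 2)
  + isum3 (fun i j l => `|vnorm2 (v i j l) ^+ 2 - vnorm2 (u i j l) ^+ 2|) <= Num.sqrt X * P.
Proof.
move=> vX vu_le.
have mean_le : N%:R^-1 * isum3 (fun i j l => vnorm2 (u i j l) ^+ 2)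
    <= Num.sqrt (N%:R * l2sq N u) * Num.sqrt X.
  have VE : isum3 (fun i j l => vnorm2 (u i j l)) = N%:R ^+ 2 * (N%:R * l2sq N u).
    by rewrite l2sqE mulrA -exprSr mulrA -exprMn mulfV ?gt_eqF // expr1n mul1r.
  have := isum3_quartic_le N u; rewrite VE sqrtrM ?exprn_ge0 ?ler0n //.
  rewrite sqrtr_sqr ger0_norm ?ler0n // -mulrA => sum_le.
  by rewrite ler_pdivrMl.
have dist_le := isum3_quartic_dist_le vX.
have grad_le : Num.sqrt (isum3 (fun i j l => vnorm2 (v i j l - u i j l)))
    <= Num.sqrt (N%:R * gradsq N u).
  rewrite ler_sqrt; last exact: mulr_ge0 (ler0n _ _) (gradsq_ge0 N u).
  exact: isum3_shift_dist_le.
have := ler_wpM2r (sqrtr_ge0 X) grad_le.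
rewrite -/X in dist_le; rewrite /P; nra.
Qed.

Let W i j l := vnorm2 (u i j l) ^+ 2.

Lemma mean_tvar_sums_le :
  [/\ isum (fun j => isum (fun l => mean_tvar N (fun m => W m j l))) <= Num.sqrt X * P,
      isum (fun i => isum (fun l => mean_tvar N (fun m => W i m l))) <= Num.sqrt X * P &
      isum (fun i => isum (fun j => mean_tvar N (fun m => W i j m))) <= Num.sqrt X * P].
Proof.
have [sx sy sz] := u_neu.
have V3_ge0 i j l : 0 <= vnorm2 (u i j l) ^+ 3 by rewrite exprn_ge0 ?vnorm2_ge0.
split.
- have -> : isum (fun j => isum (fun l => mean_tvar N (fun m => W m j l)))
      = N%:R^-1 * isum3 W + isum3 (fun i j l => `|W i.+1 j l - W i j l|).
    rewrite -!isum3_perm_x -isumZ -isumD; apply: eq_isum => j _.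
    by rewrite -isumZ -isumD.
  apply: line_sum_le (@gradpt_ge_x R N u).
  by apply: isum3_shx_le => // j l int_j int_l /=; rewrite sx.
- have -> : isum (fun i => isum (fun l => mean_tvar N (fun m => W i m l)))
      = N%:R^-1 * isum3 W + isum3 (fun i j l => `|W i j.+1 l - W i j l|).
    rewrite -!isum3_perm_y -isumZ -isumD; apply: eq_isum => i _.
    by rewrite -isumZ -isumD.
  apply: line_sum_le (@gradpt_ge_y R N u).
  by apply: isum3_shy_le => // i l int_i int_l /=; rewrite sy.
- have -> : isum (fun i => isum (fun j => mean_tvar N (fun m => W i j m)))
      = N%:R^-1 * isum3 W + isum3 (fun i j l => `|W i j l.+1 - W i j l|).
    rewrite -isumZ -isumD; apply: eq_isum => i _.
    by rewrite -isumZ -isumD.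
  apply: line_sum_le (@gradpt_ge_z R N u).
  by apply: isum3_shz_le => // i j int_i int_j /=; rewrite sz.
Qed.

(* With W = |u|^4, each value W i j l is bounded by the mean plus the total
   variation of W along each of the three lines through (i, j, l); the product
   of the three bounds is summed by Loomis--Whitney. *)
Lemma isum3_sextic_le : X <= Num.sqrt ((Num.sqrt X * P) ^+ 3).
Proof.
have [sumA sumB sumC] := mean_tvar_sums_le.
have W_ge0 i j l : 0 <= W i j l by rewrite /W sqr_ge0.
set A := fun j l => mean_tvar N (fun m => W m j l) in sumA.
set B := fun i l => mean_tvar N (fun m => W i m l) in sumB.
set C := fun i j => mean_tvar N (fun m => W i j m) in sumC.
have A_ge0 x y : 0 <= A x y by apply: mean_tvar_ge0.
have B_ge0 x y : 0 <= B x y by apply: mean_tvar_ge0.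
have C_ge0 x y : 0 <= C x y by apply: mean_tvar_ge0.
apply: le_trans (_ : isum3 (fun i j l => Num.sqrt (A j l * B i l * C i j)) <= _).
  apply: ler_isum3 => i j l int_i int_j int_l.
  have cube_ge0 := exprn_ge0 3 (vnorm2_ge0 (u i j l)).
  rewrite -(ger0_norm cube_ge0) -sqrtr_sqr ler_sqrt ?mulr_ge0 //.
  have -> : (vnorm2 (u i j l) ^+ 3) ^+ 2 = W i j l * W i j l * W i j l.
    by rewrite /W; ring.
  have WA := ler_mean_tvar (fun m => W m j l) N_gt0 int_i.
  have WB := ler_mean_tvar (fun m => W i m l) N_gt0 int_j.
  have WC := ler_mean_tvar (fun m => W i j m) N_gt0 int_l.
  by apply: ler_pM => //; [exact: mulr_ge0 | exact: ler_pM].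
apply: le_trans (isum3_LoomisWhitney N A_ge0 B_ge0 C_ge0) _.
have YP_ge0 : 0 <= Num.sqrt X * P by rewrite mulr_ge0 ?sqrtr_ge0.
rewrite ler_sqrt ?exprn_ge0 // (_ : _ ^+ 3 = Num.sqrt X * P * (Num.sqrt X * P) * (Num.sqrt X * P));
  last by ring.
have sum2_ge0 (F : nat -> nat -> R) : (forall x y, 0 <= F x y) -> 0 <= isum (fun x => isum (F x)).
  by move=> F_ge0; do 2!(apply: isum_ge0 => ? _).
have SA := sum2_ge0 _ A_ge0; have SB := sum2_ge0 _ B_ge0; have SC := sum2_ge0 _ C_ge0.
exact: ler_pM (mulr_ge0 SA SB) SC (ler_pM SA SB sumA sumB) sumC.
Qed.

Lemma discrete_sobolev i j l : interior i -> interior j -> interior l ->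
  vnorm2 (u i j l) <= N%:R * (2 * l2sq N u + 72 * gradsq N u).
Proof.
move=> int_i int_j int_l.
have X_le := le_pow6_of_le_sqrt_cube X_ge0 P_ge0 isum3_sextic_le.
have V3_le : vnorm2 (u i j l) ^+ 3 <= X.
  by apply: (ler_isum3_term (F := fun i j l => vnorm2 (u i j l) ^+ 3)) => // *;
    rewrite exprn_ge0 ?vnorm2_ge0.
have V_le : vnorm2 (u i j l) <= P ^+ 2.
  rewrite -(ler_pXn2r (_ : (0 < 3)%N)) ?nnegrE ?vnorm2_ge0 ?exprn_ge0 // -exprM.
  exact: le_trans V3_le X_le.
apply: le_trans V_le _; rewrite /P.
set a := Num.sqrt (N%:R * l2sq N u); set b := Num.sqrt (N%:R * gradsq N u).
have a2 : a ^+ 2 = N%:R * l2sq N u by rewrite sqr_sqrtr // mulr_ge0 ?l2sq_ge0.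
have b2 : b ^+ 2 = N%:R * gradsq N u by rewrite sqr_sqrtr // mulr_ge0 ?gradsq_ge0.
rewrite mulrDr (mulrCA _ 2) (mulrCA _ 72) -a2 -b2.
by rewrite -subr_ge0 (_ : _ - _ = (a - 6 * b) ^+ 2) ?sqr_ge0 //; ring.
Qed.

End DiscreteSobolevEmbedding.

(** * The inverse estimate and the interpolant of m_e *)

Lemma gradsq_le_l2sq (R : realType) (N : nat) (u : gridfun R) :
  (0 < N)%N -> upper_neumann N u -> gradsq N u <= 18 * N%:R ^+ 2 * l2sq N u.
Proof.
move=> N_gt0 [ux uy uz].
have N2_ge0 : (0 : R) <= N%:R ^+ 2 by rewrite exprn_ge0.
set V := fun i j l => vnorm2 (u i j l).
have V_ge0 i j l : 0 <= V i j l := vnorm2_ge0 _.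
have diff_le (x y : 'rV[R]_3) : vnorm2 (x - y) <= 2 * vnorm2 x + 2 * vnorm2 y.
  by have := vnorm2D_Young x (- y) ltr01; rewrite invr1 vnorm2N.
have pt_le i j l : gradpt N u i j l <= N%:R ^+ 2 *
    ((2 * V i.+1 j l + 2 * V i j.+1 l + 2 * V i j l.+1) + 6 * V i j l).
  rewrite /gradpt vnorm2_Dx vnorm2_Dy vnorm2_Dz -!mulrDr; apply: ler_wpM2l => //.
  have := diff_le (shx u i j l) (u i j l); have := diff_le (shy u i j l) (u i j l).
  by have := diff_le (shz u i j l) (u i j l); rewrite /V /shx /shy /shz; lra.
rewrite gradsqE l2sqE mulrCA ler_pM2l ?exprn_gt0 ?invr_gt0 ?ltr0n //.
apply: le_trans (ler_isum3 (fun i j l _ _ _ => pt_le i j l)) _.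
rewrite isum3Z (mulrC 18) -(mulrA (N%:R ^+ 2)); apply: ler_wpM2l => //.
rewrite !isum3D !isum3Z.
have neu (F : 'rV[R]_3 -> R) := (fun j l hj hl => congr1 F (ux j l hj hl),
  fun i l hi hl => congr1 F (uy i l hi hl), fun i j hi hj => congr1 F (uz i j hi hj)).
have := isum3_shx_le N_gt0 V_ge0 (neu _).1.1.
have := isum3_shy_le N_gt0 V_ge0 (neu _).1.2.
have := isum3_shz_le N_gt0 V_ge0 (neu _).2.
have := @isum3_ge0 R N V (fun i j l _ _ _ => V_ge0 i j l).
rewrite /V; lra.
Qed.

Section Interpolation.
Variables (R : realType) (N : nat).
Hypothesis N_gt0 : (0 < N)%N.
Local Notation interior := (interior N).

Lemma clampN_interior i : interior (clampN N i).
Proof.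
rewrite /clampN interiorE; case: eqP => [_|/eqP i_neq0]; first by rewrite leqnn N_gt0.
by case: (ltnP N i) => [_|i_le]; rewrite ?leqnn ?N_gt0 // lt0n i_neq0.
Qed.

Lemma clampN_id i : interior i -> clampN N i = i.
Proof.
by rewrite /clampN interiorE => /andP[i_ge1 i_le]; rewrite gtn_eqF // ltnNge i_le.
Qed.

Lemma clampN_SN : clampN N N.+1 = N.
Proof. by rewrite /clampN /= ltnSn. Qed.

Lemma clampN_neumann (T : Type) (g : nat -> T) c :
  (c <= N.+1)%N -> g 0 = g 1 -> g N.+1 = g N -> g c = g (clampN N c).
Proof.
move=> c_le g0 gN; rewrite /clampN; case: eqP => [->|_] //.
by case: ltnP => // N_lt; rewrite (_ : c = N.+1) //; lia.
Qed.

Lemma inX_clampN (f : gridfun R) i j l : inX N f ->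
  (i <= N.+1)%N -> (j <= N.+1)%N -> (l <= N.+1)%N ->
  f i j l = f (clampN N i) (clampN N j) (clampN N l).
Proof.
move=> [fx [fy fz]] i_le j_le l_le.
have cl_le c : (clampN N c <= N.+1)%N by have /andP[_ /leqW] := clampN_interior c.
rewrite (clampN_neumann (g := fun c => f c j l)) //; try by case: (fx j l).
rewrite (clampN_neumann (g := fun c => f _ c l)) //; try by case: (fy _ l (cl_le i)).
by rewrite (clampN_neumann (g := fun c => f _ _ c)) //; case: (fz _ _ (cl_le i) (cl_le j)).
Qed.

Lemma inX_upper_neumann (f : gridfun R) : inX N f -> upper_neumann N f.
Proof.
have int_le c : interior c -> (c <= N.+1)%N by case/andP=> _ /leqW.
by move=> [fx [fy fz]]; split=> a b /int_le a_le /int_le b_le;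
  [case: (fx a b) | case: (fy a b) | case: (fz a b)].
Qed.

Lemma Ph_upper_neumann (m : R -> R -> R -> 'rV[R]_3) : upper_neumann N (Ph N m).
Proof. by split=> *; rewrite /Ph clampN_SN (clampN_id (interiorN N_gt0)). Qed.

Lemma coord_unit c : interior c -> 0 <= Defs.coord R N c <= 1.
Proof.
move=> /andP[c_ge1 c_le]; rewrite /Defs.coord /hN.
have N_gt0' : (0 : R) < N%:R by rewrite ltr0n.
have c1 : 1 <= (c%:R : R) by rewrite ler1n.
have cN : (c%:R : R) <= N%:R by rewrite ler_nat.
have half_le1 : (2^-1 : R) <= 1 by rewrite invf_le1 ?ler1n.
apply/andP; split; first by rewrite mulr_ge0 ?invr_ge0 // subr_ge0 (le_trans half_le1).
by rewrite ler_pdivrMr // mul1r (le_trans _ cN) // gerBl invr_ge0 ler0n.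
Qed.

Lemma coord_clampN_step i : interior i ->
  `|Defs.coord R N (clampN N i.+1) - Defs.coord R N (clampN N i)| <= N%:R^-1.
Proof.
move=> int_i; rewrite (clampN_id int_i) /coord /hN.
have N_inv_ge0 : (0 : R) <= N%:R^-1 by rewrite invr_ge0.
have [i_lt|N_le] := ltnP i N.
  rewrite clampN_id; last by rewrite interiorE i_lt.
  rewrite -mulrBl (_ : _ - _ - _ = 1) ?mul1r ?ger0_norm //.
  by rewrite -natr1; ring.
by rewrite (_ : i = N) ?clampN_SN ?subrr ?normr0 //; move: int_i N_le; rewrite interiorE; lia.
Qed.

Lemma dist3_x (x1 y1 x2 x3 : R) : dist3 x1 x2 x3 y1 x2 x3 = `|x1 - y1|.
Proof. by rewrite /dist3 !subrr expr0n !addr0 sqrtr_sqr. Qed.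

Lemma dist3_y (x1 x2 y2 x3 : R) : dist3 x1 x2 x3 x1 y2 x3 = `|x2 - y2|.
Proof. by rewrite /dist3 !subrr expr0n add0r addr0 sqrtr_sqr. Qed.

Lemma dist3_z (x1 x2 x3 y3 : R) : dist3 x1 x2 x3 x1 x2 y3 = `|x3 - y3|.
Proof. by rewrite /dist3 !subrr expr0n !add0r sqrtr_sqr. Qed.

Variables (Cs : R) (me : R -> R -> R -> 'rV[R]_3).
Hypotheses (me_W1inf : W1inf_bounded Cs me)
  (me_unit : forall x1 x2 x3, in_cube x1 x2 x3 -> vnorm (me x1 x2 x3) = 1).

Lemma in_cube_clampN i j l :
  in_cube (Defs.coord R N (clampN N i)) (Defs.coord R N (clampN N j)) (Defs.coord R N (clampN N l)).
Proof. by split; apply/coord_unit/clampN_interior. Qed.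

Lemma vnorm2_Ph i j l : vnorm2 (Ph N me i j l) = 1.
Proof. by rewrite -vnorm_sqr me_unit ?expr1n //; apply: in_cube_clampN. Qed.

Lemma Cs_ge0 : 0 <= Cs.
Proof.
have [me_le _] := me_W1inf; have := me_le _ _ _ (in_cube_clampN 0 0 0).
by rewrite me_unit; [exact: le_trans ler01 | exact: in_cube_clampN].
Qed.

Lemma Ph_step (i j l i' j' l' : nat) :
  dist3 (Defs.coord R N (clampN N i')) (Defs.coord R N (clampN N j')) (Defs.coord R N (clampN N l'))
        (Defs.coord R N (clampN N i)) (Defs.coord R N (clampN N j)) (Defs.coord R N (clampN N l)) <= N%:R^-1 ->
  N%:R ^+ 2 * vnorm2 (Ph N me i' j' l' - Ph N me i j l) <= Cs ^+ 2.
Proof.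
move=> d_le; have [_ me_lip] := me_W1inf.
have := me_lip _ _ _ _ _ _ (in_cube_clampN i' j' l') (in_cube_clampN i j l).
move=> /le_trans /(_ (ler_wpM2l Cs_ge0 d_le)).
rewrite vnorm_le ?mulr_ge0 ?Cs_ge0 ?invr_ge0 // exprMn exprVn.
by rewrite ler_pdivlMr ?exprn_gt0 ?ltr0n // mulrC.
Qed.

Lemma Ph_step_x i j l : interior i ->
  N%:R ^+ 2 * vnorm2 (shx (Ph N me) i j l - Ph N me i j l) <= Cs ^+ 2.
Proof. by move=> int_i; apply: Ph_step; rewrite dist3_x coord_clampN_step. Qed.

Lemma Ph_step_y i j l : interior j ->
  N%:R ^+ 2 * vnorm2 (shy (Ph N me) i j l - Ph N me i j l) <= Cs ^+ 2.
Proof. by move=> int_j; apply: Ph_step; rewrite dist3_y coord_clampN_step. Qed.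

Lemma Ph_step_z i j l : interior l ->
  N%:R ^+ 2 * vnorm2 (shz (Ph N me) i j l - Ph N me i j l) <= Cs ^+ 2.
Proof. by move=> int_l; apply: Ph_step; rewrite dist3_z coord_clampN_step. Qed.

End Interpolation.

(** * Error estimates *)

Section Thresholds.
Variable R : realType.

Lemma powR_eighths (k : R) (n : nat) : 0 <= k -> powR k (n%:R / 8) = powR k 8^-1 ^+ n.
Proof. by move=> k_ge0; rewrite mulrC powRrM powR_mulrn // powR_ge0. Qed.

Lemma le_sqr_of_sqrt_le (x y : R) : 0 <= x -> Num.sqrt x <= y -> x <= y ^+ 2.
Proof.
move=> x_ge0 sx_le; have y_ge0 := le_trans (sqrtr_ge0 x) sx_le.
by rewrite -(sqr_sqrtr x_ge0) ler_pXn2r ?nnegrE ?sqrtr_ge0.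
Qed.

Lemma small_k_facts (C2 k : R) : 0 < C2 -> 0 < k -> k <= (2 + 52 * C2)^-1 ^+ 8 ->
  [/\ k <= 1, 26 * C2 * powR k 8^-1 ^+ 14 <= 4^-1
    & 2 * (26 * C2 * powR k 8^-1 ^+ 14) <= powR k (5 / 4) * powR k (1 / 4)].
Proof.
move=> C2_gt0 k_gt0 k_le.
set q0 := (2 + 52 * C2)^-1; set q := powR k 8^-1.
have q0_gt0 : 0 < q0.
  by rewrite invr_gt0; lra.
have q_gt0 : 0 < q by rewrite powR_gt0.
have k_ge0 := ltW k_gt0; have q0_ge0 := ltW q0_gt0.
have q_le : q <= q0.
  have q0E : powR (q0 ^+ 8) 8^-1 = q0.
    by rewrite -powR_mulrn // -powRrM mulfV ?powRr1 // pnatr_eq0.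
  by rewrite -q0E ge0_ler_powR ?nnegrE ?invr_ge0 ?ler0n ?exprn_ge0.
have q0_half : q0 <= 2^-1.
  by rewrite /q0 lef_pV2 ?posrE; lra.
have q_le1 : q <= 1.
  by apply: le_trans q_le (le_trans q0_half _); rewrite invf_le1 ?ler1n.
have kE : k = q ^+ 8 by rewrite /q -powR_eighths // divff ?powRr1 // pnatr_eq0.
have C2q : 52 * C2 * q <= 1.
  apply: le_trans (_ : 52 * C2 * q0 <= 1); first by rewrite ler_wpM2l // mulr_ge0 // ltW.
  by rewrite /q0 mulrC ler_pdivrMl ?mulr1; lra.
have qpow m n : (m <= n)%N -> q ^+ n <= q ^+ m.
  move=> mn; rewrite -(subnKC mn) exprD ger_pMr ?exprn_gt0 //.
  exact: exprn_ile1 (ltW q_gt0) q_le1.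
have -> : (5 / 4 : R) = 10%:R / 8 by field.
have -> : (1 / 4 : R) = 2%:R / 8 by field.
rewrite !powR_eighths // -/q -exprD.
have M_le : 2 * (26 * C2 * q ^+ 14) <= q ^+ 13.
  rewrite (_ : 14 = 1 + 13)%N // exprD expr1 mulrA -mulrA (mulrA 2) mulrA.
  by rewrite ger_pMl ?exprn_gt0 //; lra.
split => //; first by rewrite kE exprn_ile1 // ltW.
- apply: le_trans (_ : 2^-1 * q ^+ 13 <= _); first by lra.
  have : q ^+ 13 <= q ^+ 1 by apply: qpow.
  rewrite expr1 => q13; apply: le_trans (_ : 2^-1 * 2^-1 <= _); first by nra.
  by rewrite -invfM (_ : 2 * 2 = 4 :> R) //; lra.
- by apply: le_trans M_le _; apply: qpow.
Qed.

Lemma large_err_dichotomy (C2 k th : R) (N : nat) : 0 < C2 -> 0 < k -> k <= 1 -> 0 < th ->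
  N%:R * k <= C2 ->
  26 * C2 * powR k 8^-1 ^+ 14 <= th ^+ 2 \/ N%:R <= C2 / (th ^+ 2 / (26 * C2)).
Proof.
move=> C2_gt0 k_gt0 k_le1 th_gt0 Nk; have [|M_gt] := lerP _ (th ^+ 2); [by left | right].
set q := powR k 8^-1; have q_ge0 : 0 <= q := powR_ge0 _ _.
have kE : k = q ^+ 8 by rewrite /q -powR_eighths ?ltW // divff ?powRr1 ?ltW // pnatr_eq0.
have q_le1 : q <= 1 by rewrite -(expr_le1 (_ : 0 < 8)%N) // -kE.
have kappa_lt : th ^+ 2 / (26 * C2) < k.
  rewrite ltr_pdivrMr; last lra.
  apply: lt_le_trans M_gt _; rewrite -/q mulrC; apply: ler_wpM2r; first by rewrite mulr_ge0 // ltW.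
  by rewrite kE (_ : 14 = 8 + 6)%N // exprD ler_piMr ?exprn_ge0 // exprn_ile1.
have kappa_gt0 : 0 < th ^+ 2 / (26 * C2).
  by rewrite divr_gt0 ?exprn_gt0 //; lra.
by rewrite ler_pdivlMr //; apply: le_trans Nk; apply: ler_wpM2l => //; apply: ltW.
Qed.

Definition grad_theta (delta : R) : R := delta / (4 * (1 + delta)).

Definition grad_const (Cs delta K : R) : R :=
  72 * (1 + delta / 2) * K ^+ 2 + 108 * (1 + (delta / 2)^-1) * Cs ^+ 2.

Lemma grad_theta_facts delta : 0 < delta ->
  [/\ 0 < grad_theta delta, grad_theta delta <= 2^-1
    & (1 + delta / 2) / (1 - grad_theta delta) ^+ 2 <= 1 + delta].
Proof.
move=> delta_gt0; set th := grad_theta delta.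
have th_gt0 : 0 < th by rewrite divr_gt0 //; lra.
have thE : th * (4 * (1 + delta)) = delta.
  by rewrite /th /grad_theta mulfVK //; lra.
have th_le : th <= 4^-1.
  rewrite -(ler_pM2r (_ : 0 < 4 * (1 + delta))); last lra.
  by rewrite thE mulrA mulVf ?mul1r; lra.
split => //; first by apply: le_trans th_le _; rewrite lef_pV2 ?posrE; lra.
have key : (1 + delta) * (1 - 2 * th) = 1 + delta / 2.
  by rewrite /th /grad_theta; field; lra.
have rho_gt0 : 0 < 1 - th.
  by apply: lt_le_trans (_ : 0 < 1 - 4^-1) _; rewrite ?subr_gt0 ?invf_lt1 ?ltr1n ?lerB.
rewrite ler_pdivrMr ?exprn_gt0 //.
have sq_le : 1 - 2 * th <= (1 - th) ^+ 2.
  by rewrite -subr_ge0 (_ : _ - _ = th ^+ 2) ?sqr_ge0 //; ring.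
by rewrite -key; apply: ler_wpM2l sq_le; lra.
Qed.

End Thresholds.

Section ErrorEstimates.
Variables (R : realType) (N : nat) (Cs : R) (me : R -> R -> R -> 'rV[R]_3) (mt : gridfun R).
Hypotheses (N_gt0 : (0 < N)%N) (me_W1inf : W1inf_bounded Cs me)
  (me_unit : forall x1 x2 x3, in_cube x1 x2 x3 -> vnorm (me x1 x2 x3) = 1) (mt_X : inX N mt).
Local Notation interior := (interior N).
Local Notation isum3 := (isum3 (R := R) N).
Local Notation mu := (Ph N me).
Local Notation et := (gsub mu mt).
Local Notation e := (gsub mu (normalize mt)).

Lemma err_upper_neumann : upper_neumann N et.
Proof. exact/upper_neumann_gsub/inX_upper_neumann/mt_X/Ph_upper_neumann. Qed.

Lemma err_mt_neq0 : (forall i j l, interior i -> interior j -> interior l -> vnorm2 (et i j l) <= 4^-1) ->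
  forall i j l, (i <= N.+1)%N -> (j <= N.+1)%N -> (l <= N.+1)%N -> mt i j l != 0.
Proof.
move=> et_le i j l i_le j_le l_le; rewrite (inX_clampN N_gt0 mt_X i_le j_le l_le).
have := vnorm_ge_half (vnorm2_Ph N_gt0 me_unit _ _ _) (et_le _ _ _ (clampN_interior N_gt0 i)
  (clampN_interior N_gt0 j) (clampN_interior N_gt0 l)).
by apply: contraTneq => ->; rewrite vnorm0 -ltNge invr_gt0.
Qed.

Lemma l2sq_err_split (M al be : R) :
  (forall i j l, interior i -> interior j -> interior l -> vnorm2 (et i j l) <= M) ->
  M <= 4^-1 -> 2 * M <= al * be -> 0 <= al -> 0 <= be ->
  (1 - al) * l2sq N e + (1 - be) * l2sq N (gsub et e) <= l2sq N et.
Proof.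
move=> et_le M_le Mab al_ge0 be_ge0.
rewrite !l2sqE (mulrCA (1 - al)) (mulrCA (1 - be)) -mulrDr.
apply: ler_wpM2l; first by rewrite exprn_ge0 ?invr_ge0.
rewrite -!isum3Z -isum3D; apply: ler_isum3 => i j l *.
exact: unit_err_split (vnorm2_Ph N_gt0 me_unit _ _ _) (et_le _ _ _ _ _ _) M_le Mab al_ge0 be_ge0.
Qed.

Lemma gradsq_err_le (eta eps : R) :
  (forall i j l, interior i -> interior j -> interior l -> vnorm2 (et i j l) <= eta ^+ 2) ->
  0 <= eta -> eta <= 2^-1 -> 0 < eps ->
  gradsq N e <= (1 + eps) / (1 - eta) ^+ 2 * gradsq N et + 108 * (1 + eps^-1) * Cs ^+ 2 * l2sq N et.
Proof.
move=> et_le eta_ge0 eta_le eps_gt0.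
set c1 := (1 + eps) / _; set c := 108 * _ * _.
rewrite gradsqE l2sqE (mulrCA c1) (mulrCA c) -mulrDr.
apply: ler_wpM2l; first by rewrite exprn_ge0 ?invr_ge0.
rewrite -!isum3Z -isum3D; apply: ler_isum3 => i j l int_i int_j int_l.
have [shx_le shy_le shz_le] := upper_neumann_shift (P := fun v => vnorm2 v <= eta ^+ 2) err_upper_neumann et_le int_i int_j int_l.
have mu1 := vnorm2_Ph N_gt0 me_unit.
have step := err_step_le (mu1 _ _ _) (mu1 _ _ _) eta_ge0 eta_le (et_le _ _ _ int_i int_j int_l) _ eps_gt0.
have hx : N%:R ^+ 2 * vnorm2 (shx e i j l - e i j l) <=
    c1 * (N%:R ^+ 2 * vnorm2 (shx et i j l - et i j l)) + 36 * (1 + eps^-1) * vnorm2 (et i j l) * Cs ^+ 2.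
  exact: step shx_le (Ph_step_x N_gt0 me_W1inf me_unit _ _ int_i).
have hy : N%:R ^+ 2 * vnorm2 (shy e i j l - e i j l) <=
    c1 * (N%:R ^+ 2 * vnorm2 (shy et i j l - et i j l)) + 36 * (1 + eps^-1) * vnorm2 (et i j l) * Cs ^+ 2.
  exact: step shy_le (Ph_step_y N_gt0 me_W1inf me_unit _ _ int_j).
have hz : N%:R ^+ 2 * vnorm2 (shz e i j l - e i j l) <=
    c1 * (N%:R ^+ 2 * vnorm2 (shz et i j l - et i j l)) + 36 * (1 + eps^-1) * vnorm2 (et i j l) * Cs ^+ 2.
  exact: step shz_le (Ph_step_z N_gt0 me_W1inf me_unit _ _ int_l).
rewrite /gradpt !(vnorm2_Dx, vnorm2_Dy, vnorm2_Dz) /c; lra.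
Qed.

Lemma err_sup_le (C2 k : R) : 0 < k -> k <= 1 -> N%:R * k <= C2 ->
  l2norm N et <= 2 * powR k (15 / 8) -> gradnorm N et <= 2^-1 * powR k (11 / 8) ->
  forall i j l, interior i -> interior j -> interior l ->
  vnorm2 (et i j l) <= 26 * C2 * powR k 8^-1 ^+ 14.
Proof.
move=> k_gt0 k_le1 Nk l2_le grad_le i j l int_i int_j int_l.
have k_ge0 := ltW k_gt0; set q := powR k 8^-1; have q_ge0 : 0 <= q := powR_ge0 _ _.
have kE : k = q ^+ 8 by rewrite /q -powR_eighths // divff ?powRr1 // pnatr_eq0.
have q_le1 : q <= 1 by rewrite -(expr_le1 (_ : 0 < 8)%N) // -kE.
have sqr2 : (2 : R) ^+ 2 = 4 by rewrite expr2 -natrM.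
have {}l2_le : l2sq N et <= 4 * q ^+ 30.
  have := le_sqr_of_sqrt_le (l2sq_ge0 N et) l2_le.
  by rewrite powR_eighths // -/q exprMn -exprM sqr2.
have {}grad_le : gradsq N et <= 4^-1 * q ^+ 22.
  have := le_sqr_of_sqrt_le (gradsq_ge0 N et) grad_le.
  by rewrite powR_eighths // -/q exprMn -exprM exprVn sqr2.
have q8 : q ^+ 30 <= q ^+ 22.
  by rewrite (_ : 30 = 22 + 8)%N // exprD ler_piMr ?exprn_ge0 // exprn_ile1.
apply: le_trans (discrete_sobolev N_gt0 err_upper_neumann int_i int_j int_l) _.
have -> : 26 * C2 * q ^+ 14 = 26 * q ^+ 14 * C2 by ring.
apply: le_trans (_ : N%:R * (26 * q ^+ 22) <= _).
  by rewrite ler_pM2l ?ltr0n //; lra.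
have -> : N%:R * (26 * q ^+ 22) = 26 * q ^+ 14 * (N%:R * k) by rewrite kE; ring.
by rewrite ler_wpM2l // mulr_ge0 ?exprn_ge0.
Qed.

(* Either the pointwise error is below grad_theta delta, and normalisation
   almost preserves difference quotients, or N <= K, and the inverse estimate
   turns the gradient of e~_h into an L^2 term. *)
Lemma gradsq_err_final (delta M K : R) : 0 < delta ->
  (forall i j l, interior i -> interior j -> interior l -> vnorm2 (et i j l) <= M) ->
  M <= 4^-1 -> M <= grad_theta delta ^+ 2 \/ N%:R <= K ->
  gradsq N e <= (1 + delta) * gradsq N et + grad_const Cs delta K * l2sq N et.
Proof.
move=> delta_gt0 et_le M_le M_cases.
have [th_gt0 th_le c1_le] := grad_theta_facts delta_gt0.
have eps_gt0 : 0 < delta / 2 by rewrite divr_gt0.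
have l2_ge0 := l2sq_ge0 N et; have g_ge0 := gradsq_ge0 N et.
have c_ge0 : 0 <= 108 * (1 + (delta / 2)^-1) * Cs ^+ 2 * l2sq N et.
  apply/mulr_ge0/l2_ge0/mulr_ge0/sqr_ge0/mulr_ge0 => //.
  by rewrite addr_ge0 // invr_ge0 ltW.
have K_ge0 : 0 <= 72 * (1 + delta / 2) * K ^+ 2 * l2sq N et.
  by apply/mulr_ge0/l2_ge0/mulr_ge0/sqr_ge0/mulr_ge0 => //; lra.
rewrite /grad_const mulrDl.
case: M_cases => [M_th | N_le].
  have := gradsq_err_le (fun i j l int_i int_j int_l => le_trans (et_le i j l int_i int_j int_l) M_th)
    (ltW th_gt0) th_le eps_gt0.
  by have := ler_wpM2r g_ge0 c1_le; lra.
have half_le : M <= 2^-1 ^+ 2 by rewrite exprVn expr2 -natrM.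
have half_ge0 : (0 : R) <= 2^-1 by rewrite invr_ge0.
have := gradsq_err_le (fun i j l int_i int_j int_l => le_trans (et_le i j l int_i int_j int_l) half_le)
    half_ge0 (lexx _) eps_gt0.
have -> : (1 + delta / 2) / (1 - 2^-1) ^+ 2 = 4 * (1 + delta / 2) by field.
have N2_le : N%:R ^+ 2 <= K ^+ 2 by rewrite ler_pXn2r ?nnegrE // (le_trans _ N_le).
have g_le : gradsq N et <= 18 * K ^+ 2 * l2sq N et.
  apply: le_trans (gradsq_le_l2sq N_gt0 err_upper_neumann) _.
  by rewrite -!(mulrA 18); apply: ler_wpM2l; [lra | exact: ler_wpM2r].
have := ler_wpM2l (_ : 0 <= 4 * (1 + delta / 2)) g_le; rewrite mulr_ge0 //; last lra.
move=> /(_ isT) g_bound err_le.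
have : 0 <= (1 + delta) * gradsq N et.
  by rewrite mulr_ge0 //; lra.
lra.
Qed.

End ErrorEstimates.

Theorem mainTheorem3 (R : realType) (Cs C1 C2 : R) :
  0 < Cs -> 0 < C1 -> 0 < C2 ->
  exists k0 : R, 0 < k0 /\
  forall delta : R, 0 < delta ->
  exists Cd : R,
  forall (N : nat) (k : R) (me : R -> R -> R -> 'rV[R]_3) (mt : gridfun R),
    (0 < N)%N -> 0 < k ->
    C1 * hN R N <= k -> k <= C2 * hN R N ->
    k <= k0 -> hN R N <= k0 ->
    W1inf_bounded Cs me ->
    (forall x1 x2 x3, in_cube x1 x2 x3 -> vnorm (me x1 x2 x3) = 1) ->
    inX N mt ->
    let mu := Ph N me in
    let et := gsub mu mt in
    let e := gsub mu (normalize mt) in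
    l2norm N et <= 2 * powR k (15 / 8) ->
    gradnorm N et <= 2^-1 * powR k (11 / 8) ->
    [/\ (forall i j l, (i <= N.+1)%N -> (j <= N.+1)%N -> (l <= N.+1)%N ->
           mt i j l != 0),
        l2sq N et >= (1 - powR k (5 / 4)) * l2sq N e
                     + (1 - powR k (1 / 4)) * l2sq N (gsub et e)
      & gradsq N e <= (1 + delta) * gradsq N et + Cd * l2sq N et].
Proof.
move=> Cs_gt0 _ C2_gt0.
exists ((2 + 52 * C2)^-1 ^+ 8); split; first by rewrite exprn_gt0 // invr_gt0; lra.
move=> delta delta_gt0.
exists (grad_const Cs delta (C2 / (grad_theta delta ^+ 2 / (26 * C2)))).
move=> N k me mt N_gt0 k_gt0 _ k_le k_small _ me_W me_unit mt_X mu et e l2_le grad_le.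
have [k_le1 M_le Mab] := small_k_facts C2_gt0 k_gt0 k_small.
have Nk : N%:R * k <= C2.
  by rewrite mulrC -ler_pdivlMr ?ltr0n.
have et_le := err_sup_le N_gt0 mt_X k_gt0 k_le1 Nk l2_le grad_le.
split.
- apply: (err_mt_neq0 N_gt0 me_unit mt_X) => i j l int_i int_j int_l.
  exact: le_trans (et_le _ _ _ int_i int_j int_l) M_le.
- exact: l2sq_err_split N_gt0 me_unit _ _ _ et_le M_le Mab (powR_ge0 _ _) (powR_ge0 _ _).
- apply: (gradsq_err_final N_gt0 me_W me_unit mt_X delta_gt0 et_le M_le).
  have [th_gt0 _ _] := grad_theta_facts delta_gt0.
  exact: large_err_dichotomy.
Qed.
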